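(* Consider the $v$-step controllable system described in the context, so that $(A+BK)^v=0$ with $v\ge 1$. Fix a time slot $k$ and condition on the realized sequence of scheduling actions and transmission outcomes $\{a_j,\delta_j,\gamma_j\}_{j<k}$. Assume that at least $v$ successful controller's transmissions occurred before slot $k$, and that at least one successful sensor's transmission occurred before slot $t^v_k$. Then the plant-state covariance $P_k=\mathbb{E}[x_kx_k^\top]$, where the expectation is over the disturbances, equals $$P_k=F(\phi^0_k)+\sum_{i=0}^{v-2} G\Big(\sum_{j=0}^{i}\phi^j_k-\sum_{j=0}^{i}\tau^{j+1}_k,\ \mathbb{1}(\phi^{i+1}_k>\tau^{i+1}_k)\big(F(\phi^{i+1}_k)-F(\tau^{i+1}_k)\big)\Big).$$ Here an empty sum is zero, so for $v=1$ the formula reads $P_k=F(\phi^0_k)$, and $$G(x,Y)=(A+BK)^xY\big((A+BK)^x\big)^\top .$$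
   Context: Time is discrete, $k=0,1,2,\dots$, and the plant evolves as $x_{k+1}=Ax_k+Bu_k+w_k$. Here $x_k\in\mathbb{R}^n$ and $u_k\in\mathbb{R}^m$, the matrices $A,B$ are constant, and $\{w_k\}$ is i.i.d. zero-mean Gaussian noise with positive definite covariance $R$, independent of the initial state. The spectral radius satisfies $\rho(A)>1$. In each slot $k$ a half-duplex controller chooses $a_k\in\{1,2\}$. If $a_k=1$, the sensor sends the exact state $x_k$ to the controller; if $a_k=2$, the controller sends a control packet to the actuator. Set $\delta_k=1$ iff $a_k=1$ and the sensor's transmission succeeds, and $\delta_k=0$ otherwise. Set $\gamma_k=1$ iff $a_k=2$ and the controller's transmission succeeds, and $\gamma_k=0$ otherwise. The controller's estimate is $\hat x_{k+1}=Ax_k+Bu_k$ if $a_k=1,\delta_k=1$, and $\hat x_{k+1}=A\hat x_k+Bu_k$ otherwise. The controller gain $K\in\mathbb{R}^{m\times n}$ satisfies $\rho(A+BK)<1$, and the prediction length is $v$. In slot $k$ the controller forms the command sequence $\mathcal{C}_k=[K\hat x_k,\,K(A+BK)\hat x_k,\dots,K(A+BK)^{v-1}\hat x_k]$. The actuator keeps a buffer $\mathcal{U}_k=[u^0_k,\dots,u^{v-1}_k]$. It sets $\mathcal{U}_k=\mathcal{C}_k$ if $a_k=2,\gamma_k=1$, and otherwise sets $\mathcal{U}_k=[u^1_{k-1},\dots,u^{v-1}_{k-1},0]$. The applied input is $u_k=u^0_k$. The plant is called $v$-step controllable if $(A+BK)^v=0$; for $v=1$ this means $A+BK=0$. Define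 $F(\tau)=\sum_{i=1}^{\tau}A^{i-1}R(A^\top)^{i-1}$ for $\tau\in\mathbb{N}$. The estimation-quality indicator is $\tau_k$, with $\tau_{k+1}=1$ if $a_k=1,\delta_k=1$ and $\tau_{k+1}=\tau_k+1$ otherwise. It counts the slots since the last successful sensor's transmission. For $i=1,\dots,v$, let $t^i_k$ be the time-slot index of the $i$-th most recent successful controller's transmission strictly before slot $k$; that is, $t^1_k>t^2_k>\dots$ are the slots $j<k$ with $a_j=2,\gamma_j=1$. The state parameters are defined as follows: - $\tau^0_k=\tau_k$, and $\tau^i_k=\tau_{t^i_k}$ for $i=1,\dots,v$. - $\eta^0_k=k-t^1_k$, and $\eta^i_k=t^i_k-t^{i+1}_k$ for $i=1,\dots,v-1$. - $\phi^i_k=\eta^i_k+\tau^{i+1}_k$ for $i=0,\dots,v-1$. *)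

From HB Require Import structures.
From mathcomp Require Import all_boot all_order all_algebra.
Set Implicit Arguments. Unset Strict Implicit. Unset Printing Implicit Defensive.
Import Order.TTheory GRing.Theory Num.Theory.
Local Open Scope ring_scope.

Section Defs.
Variable R : rcfType.

(* Evaluation of a real polynomial (coefficient list, low degree first)
   at the complex number a + b i, returned as (real part, imaginary part). *)
Fixpoint ceval (s : seq R) (a b : R) : R * R :=
  match s with
  | [::] => (0, 0)
  | c :: s' => let: (re, im) := ceval s' a b in
               (c + (a * re - b * im), a * im + b * re)
  end.

Definition spec_rad_gt1 n (M : 'M[R]_n) : Prop :=
  exists a b : R, ceval (char_poly M) a b = (0, 0) /\ 1 < a ^+ 2 + b ^+ 2.

Definition spec_rad_lt1 n (M : 'M[R]_n) : Prop :=
  forall a b : R, ceval (char_poly M) a b = (0, 0) -> a ^+ 2 + b ^+ 2 < 1.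

Definition posdef n (M : 'M[R]_n) : Prop :=
  M^T = M /\ forall z : 'cV[R]_n, z != 0 -> 0 < (z^T *m M *m z) 0 0.

(* F(tau) = sum_{i=1}^{tau} A^{i-1} R (A^T)^{i-1} *)
Definition Fcov n (A Rw : 'M[R]_n) (tau : nat) : 'M[R]_n :=
  \sum_(i < tau) (A ^+ i *m Rw *m (A ^+ i)^T).

Definition Gfun n (Acl : 'M[R]_n) (x : nat) (Y : 'M[R]_n) : 'M[R]_n :=
  Acl ^+ x *m Y *m (Acl ^+ x)^T.

(* Actuator buffer U_k, as a function of the position index i (only i < v
   is meaningful, entries with i >= v are 0). *)
Definition buf_update m n (v : nat) (K : 'M[R]_(m, n)) (Acl : 'M[R]_n)
  (xh : 'cV[R]_n) (g : bool) (Uprev : nat -> 'cV[R]_m) : nat -> 'cV[R]_m :=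
  if g then (fun i => if (i < v)%N then K *m (Acl ^+ i) *m xh else 0)
  else (fun i => if (i.+1 < v)%N then Uprev i.+1 else 0).

(* Closed-loop system: sys k = (x_k, xhat_k, U_{k-1}), for a given noise
   realization w, initial state x0, initial estimate xh0, initial buffer U0
   (playing the role of U_{-1}). *)
Fixpoint sys m n (v : nat) (A : 'M[R]_n) (B : 'M[R]_(n, m)) (K : 'M[R]_(m, n))
  (delta gamma : nat -> bool) (x0 xh0 : 'cV[R]_n) (U0 : nat -> 'cV[R]_m)
  (w : nat -> 'cV[R]_n) (k : nat) : 'cV[R]_n * 'cV[R]_n * (nat -> 'cV[R]_m) :=
  match k with
  | 0 => (x0, xh0, U0)
  | k'.+1 =>
      let: (x, xh, Up) := sys v A B K delta gamma x0 xh0 U0 w k' in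
      let U := buf_update v K (A + B *m K) xh (gamma k') Up in
      let u := U 0%N in
      (A *m x + B *m u + w k',
       if delta k' then A *m x + B *m u else A *m xh + B *m u,
       U)
  end.

End Defs.

Fixpoint lastb (P : nat -> bool) (k : nat) : option nat :=
  match k with
  | 0 => None
  | k'.+1 => if P k' then Some k' else lastb P k'
  end.

(* t_i: t 0 = k, t (i+1) = most recent successful controller slot strictly
   before t i (so t i = t^i_k for i >= 1); default 0 if none exists. *)
Fixpoint tk (gamma : nat -> bool) (k i : nat) : nat :=
  match i with
  | 0 => k
  | i'.+1 => odflt 0%N (lastb gamma (tk gamma k i'))
  end.

Fixpoint tauseq (tau0 : nat) (delta : nat -> bool) (j : nat) : nat :=
  match j with
  | 0 => tau0
  | j'.+1 => if delta j' then 1%N else (tauseq tau0 delta j').+1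
  end.

Definition tau_k tau0 delta gamma k i : nat := tauseq tau0 delta (tk gamma k i).
Definition eta_k gamma k i : nat := (tk gamma k i - tk gamma k i.+1)%N.
Definition phi_k tau0 delta gamma k i : nat :=
  (eta_k gamma k i + tau_k tau0 delta gamma k i.+1)%N.

From HB Require Import structures.
From mathcomp Require Import all_boot all_order all_algebra.
From mathcomp Require Import zify.
From Stdlib Require Import FunctionalExtensionality.
Set Implicit Arguments. Unset Strict Implicit. Unset Printing Implicit Defensive.
Import Order.TTheory GRing.Theory Num.Theory.
Local Open Scope ring_scope.

(* Write T_i = t^i_k, A_cl = A + BK and noise j L = sum_{l<L} A^l w_{j-l-1}.
   1. Schedule bookkeeping: T_0 = k > T_1 > ... > T_v are successful
      controller slots with none in between; after a sensor success tau_j <= j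
      and tau grows by at most one per slot.
   2. Trajectory (section ClosedLoop): the estimation error is noise j tau_j,
      and between controller successes x_{t+d} = A_cl^d xh_t
      + A^d (x_t - xh_t) + noise (t+d) d.  Chaining these from T_v to k with
      A_cl^v = 0 gives x_k = sum_{i<v} A_cl^{k-T_i} (noise T_i phi_i
      - noise T_i lo_i), where lo_0 = 0 and lo_i = tau_i.
   3. Covariance: the summands use consecutive, hence disjoint, windows of
      disturbances (section Windows), so E[x_k x_k^T] is the sum of the
      individual contributions (section Covariance); grouped per window they
      give G(k - T_i, F(phi_i) - F(lo_i)), which is the stated formula. *)

Lemma count_iotaS (P : nat -> bool) j :
  count P (iota 0 j.+1) = (count P (iota 0 j) + P j)%N.
Proof. by rewrite -addn1 iotaD count_cat /= addn0 add0n. Qed.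

Lemma lastb_spec (P : nat -> bool) j :
  match lastb P j with
  | Some t => [/\ (t < j)%N, P t, (forall i, (t < i < j)%N -> ~~ P i) &
               count P (iota 0 j) = (count P (iota 0 t)).+1]
  | None => count P (iota 0 j) = 0%N
  end.
Proof.
elim: j => [//|j IH]; rewrite [lastb P j.+1]/= count_iotaS.
case Pj: (P j); first by split=> // [i|]; [lia | rewrite addn1].
move: IH; case: (lastb P j) => [t [lt_tj Pt gap ->]|->] //.
split=> //; [lia | | by rewrite addn0].
move=> i /andP [lt_ti]; rewrite ltnS leq_eqVlt => /orP [/eqP ->|lt_ij].
  by rewrite Pj.
by apply: gap; rewrite lt_ti.
Qed.

Lemma tk_succ_le gamma k i : (tk gamma k i.+1 <= tk gamma k i)%N.
Proof.
rewrite /=; have := lastb_spec gamma (tk gamma k i).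
by case: (lastb gamma (tk gamma k i)) => [t [/ltnW]|].
Qed.

Lemma tk_antitone gamma k :
  {homo tk gamma k : i j / (i <= j)%N >-> (j <= i)%N}.
Proof.
apply: homo_leq => [//|y x z le_yx le_zy|i]; first exact: leq_trans le_zy le_yx.
exact: tk_succ_le.
Qed.

Lemma count_before_tk gamma k v i :
  (v <= count gamma (iota 0 k))%N -> (i <= v)%N ->
  (v - i <= count gamma (iota 0 (tk gamma k i)))%N.
Proof.
move=> hc; elim: i => [|i IH] hi; first by rewrite subn0.
have {IH} := IH (ltnW hi).
rewrite [tk _ _ i.+1]/=; have := lastb_spec gamma (tk gamma k i).
case: (lastb gamma (tk gamma k i)) => [t [_ _ _ ->]|->] /=; lia.
Qed.

Lemma tk_step gamma k v i :
  (v <= count gamma (iota 0 k))%N -> (i < v)%N ->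
  [/\ (tk gamma k i.+1 < tk gamma k i)%N, gamma (tk gamma k i.+1) &
      forall j, (tk gamma k i.+1 < j < tk gamma k i)%N -> ~~ gamma j].
Proof.
move=> hc hi; have := count_before_tk hc (ltnW hi).
rewrite [tk _ _ i.+1]/=; have := lastb_spec gamma (tk gamma k i).
by case: (lastb gamma (tk gamma k i)) => [t []|->] //=; rewrite leqNgt subn_gt0 hi.
Qed.

(* The slots t^i_k strictly decrease, so k - t^i_k >= i; at i = v this makes
   the power of A_cl vanish in the trajectory expansion. *)
Lemma tk_gap gamma k v i :
  (v <= count gamma (iota 0 k))%N -> (i <= v)%N -> (i <= k - tk gamma k i)%N.
Proof.
move=> hc; elim: i => [//|i IH] hi.
have [lt_next _ _] := tk_step hc hi.
have := IH (ltnW hi); have := tk_antitone gamma k (leq0n i); rewrite [tk _ _ 0]/=; lia.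
Qed.

Lemma tauseq_growth tau0 delta j1 j2 : (j1 <= j2)%N ->
  (tauseq tau0 delta j2 <= (j2 - j1) + tauseq tau0 delta j1)%N.
Proof.
move=> h; rewrite -{1}(subnK h); elim: (j2 - j1)%N => [//|d IH].
by rewrite addSn /=; case: (delta (d + j1)); lia.
Qed.

Lemma ltn_skip (P : nat -> bool) s j : (s < j.+1)%N -> P s -> ~~ P j -> (s < j)%N.
Proof. by rewrite ltnS leq_eqVlt => /orP [/eqP -> -> //|]. Qed.

(* After a successful sensor transmission tau_j <= j: the disturbances that
   the estimate has missed all lie in the past. *)
Lemma tauseq_le_after_sensor tau0 (delta : nat -> bool) j s :
  (s < j)%N -> delta s -> (tauseq tau0 delta j <= j)%N.
Proof.
elim: j => [//|j IH] lt_sj delta_s /=; case dj: (delta j) => //.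
by have := IH (ltn_skip lt_sj delta_s (negbT dj)) delta_s; lia.
Qed.

(* Telescoping identity sum_{j<i} phi^j = (k - t^i_k) + sum_{j<i} tau^{j+1}:
   it turns the exponent of A_cl into the paper's expression. *)
Lemma phi_prefix_sum tau0 delta gamma k i :
  (\sum_(j < i) phi_k tau0 delta gamma k j
   = (k - tk gamma k i) + \sum_(j < i) tau_k tau0 delta gamma k j.+1)%N.
Proof.
elim: i => [|i IH]; first by rewrite !big_ord0 subnn.
have le_k : (tk gamma k i <= k)%N := tk_antitone gamma k (leq0n i).
have := tk_succ_le gamma k i.
rewrite !big_ord_recr IH /= /phi_k /eta_k -/(tk gamma k i.+1); lia.
Qed.

(* The i-th summand of the state expansion involves the
   disturbances w_r with r = t^i_k - l - 1 and tau_lo i <= l < phi^i_k, i.e.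
   r ranges over [win_end i.+1, win_end i).  Consecutive windows share an
   endpoint, so distinct (window, offset) pairs name distinct disturbances. *)
Section Windows.
Variables (delta gamma : nat -> bool) (tau0 k v s : nat).
Hypothesis hctrl : (v <= count gamma (iota 0 k))%N.
Hypothesis lt_s_tv : (s < tk gamma k v)%N.
Hypothesis delta_s : delta s.

Local Notation T i := (tk gamma k i).
Local Notation tau i := (tau_k tau0 delta gamma k i).
Local Notation phi i := (phi_k tau0 delta gamma k i).

(* Offset at which window i starts: disturbances more recent than that were
   already counted by window i - 1 (tau^i_k for i > 0, nothing for i = 0). *)
Definition tau_lo i : nat := if i == 0%N then 0%N else tau i.

Definition win_end i : nat := (T i - tau_lo i)%N.

(* Up to i = v the slot t^i_k follows the sensor success s, so tau^i_k <= t^i_k. *)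
Lemma tau_le_tk i : (i <= v)%N -> (tau i <= T i)%N.
Proof.
move=> le_iv; apply: (tauseq_le_after_sensor _ _ delta_s).
exact: leq_trans lt_s_tv (tk_antitone gamma k le_iv).
Qed.

Lemma tau_lo_le_phi i : (i < v)%N -> (tau_lo i <= phi i)%N.
Proof.
move=> lt_iv; rewrite /tau_lo /phi_k /eta_k /tau_k; case: eqP => // _.
have [lt_next _ _] := tk_step hctrl lt_iv.
exact: (tauseq_growth tau0 delta (ltnW lt_next)).
Qed.

(* Offsets stay below t^i_k, so no disturbance index is truncated at 0. *)
Lemma phi_le_tk i : (i < v)%N -> (phi i <= T i)%N.
Proof.
move=> lt_iv; have [lt_next _ _] := tk_step hctrl lt_iv.
have := tau_le_tk lt_iv; rewrite /phi_k /eta_k; lia.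
Qed.

Lemma win_end_succ i : (i < v)%N -> win_end i.+1 = (T i - phi i)%N.
Proof.
move=> lt_iv; have [lt_next _ _] := tk_step hctrl lt_iv.
have := tau_le_tk lt_iv.
rewrite /win_end /phi_k /eta_k -[tau_lo i.+1]/(tau i.+1); lia.
Qed.

Lemma win_end_antitone i j : (i <= j <= v)%N -> (win_end j <= win_end i)%N.
Proof.
move=> /andP [le_ij le_jv].
apply: (@homo_leq_in _ [pred i | i <= v]%N _ (fun a b => b <= a)%N) => //=.
- by move=> y x z le_yx le_zy; exact: leq_trans le_zy le_yx.
- by move=> a b; rewrite !inE => le_av le_bv c /andP [_ /ltnW /leq_trans]; apply.
- move=> a _; rewrite inE => lt_av; rewrite win_end_succ //.
  by apply: leq_sub2l; exact: tau_lo_le_phi.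
- by rewrite inE (leq_trans le_ij).
Qed.

Lemma noise_index_in_window i l : (i < v)%N -> (tau_lo i <= l < phi i)%N ->
  (win_end i.+1 <= T i - l.+1 < win_end i)%N.
Proof.
move=> lt_iv /andP [le_lo lt_phi]; rewrite win_end_succ // /win_end.
have := phi_le_tk lt_iv; lia.
Qed.

Lemma noise_index_lt i j l l' : (i < j < v)%N ->
  (tau_lo i <= l < phi i)%N -> (tau_lo j <= l' < phi j)%N ->
  (T j - l'.+1 < T i - l.+1)%N.
Proof.
move=> /andP [lt_ij lt_jv] win_i win_j.
have /andP [le_i _] := noise_index_in_window (ltn_trans lt_ij lt_jv) win_i.
have /andP [_ lt_j] := noise_index_in_window lt_jv win_j.
have : (win_end j <= win_end i.+1)%N by apply: win_end_antitone; rewrite lt_ij ltnW.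
lia.
Qed.

(* The (window, offset) pairs indexing the disturbances present in x_k. *)
Definition noise_pairs : seq (nat * nat) :=
  [seq (i, l) | i <- iota 0 v, l <- iota (tau_lo i) (phi i - tau_lo i)].

Lemma uniq_noise_index : uniq [seq (T x.1 - x.2.+1)%N | x <- noise_pairs].
Proof.
rewrite /noise_pairs map_allpairs.
apply: allpairs_uniq_dep => [|i _|]; rewrite ?iota_uniq //.
move=> _ _ /allpairsPdep [i1 [l1 [+ + ->]]] /allpairsPdep [i2 [l2 [+ + ->]]] /=.
rewrite !mem_iota !add0n => /andP [_ lt_i1] win1 /andP [_ lt_i2] win2.
rewrite subnKC in win1; last exact: tau_lo_le_phi.
rewrite subnKC in win2; last exact: tau_lo_le_phi.
case: (ltngtP i1 i2) => [lt12|lt21|eq12] eq_idx.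
- exfalso; have := @noise_index_lt i1 i2 l1 l2; rewrite lt12 lt_i2.
  by move=> /(_ isT win1 win2); lia.
- exfalso; have := @noise_index_lt i2 i1 l2 l1; rewrite lt21 lt_i1.
  by move=> /(_ isT win2 win1); lia.
- subst i2; have le_phi := phi_le_tk lt_i1.
  by have -> : l1 = l2 by lia.
Qed.

End Windows.

Lemma sum_ord_diff (V : zmodType) (F : nat -> V) a b : (a <= b)%N ->
  \sum_(l < b) F l - \sum_(l < a) F l = \sum_(l <- iota a (b - a)) F l.
Proof.
move=> le_ab; rewrite -!(big_mkord xpredT F) (@big_cat_nat _ _ _ a 0 b) //=.
by rewrite addrAC subrr add0r.
Qed.

Lemma Gfun_Fcov_diff (R : rcfType) n (M A Rw : 'M[R]_n) x a b : (a <= b)%N ->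
  Gfun M x (Fcov A Rw b - Fcov A Rw a)
  = \sum_(l <- iota a (b - a)) (M ^+ x *m A ^+ l) *m Rw *m (M ^+ x *m A ^+ l)^T.
Proof.
move=> le_ab; rewrite /Fcov (sum_ord_diff (fun l => A ^+ l *m Rw *m (A ^+ l)^T)) //.
rewrite /Gfun mulmx_sumr mulmx_suml; apply: eq_bigr => l _.
by rewrite trmx_mul !mulmxA.
Qed.

Lemma sum_pick_uniq (V : nmodType) (I J : eqType) (s : seq I) (f : I -> J)
    (g : I -> V) a :
  uniq (map f s) -> a \in s ->
  \sum_(b <- s) (if f a == f b then g b else 0) = g a.
Proof.
elim: s => [//|b s IH] /= /andP [fb_notin us]; rewrite in_cons big_cons.
case/orP => [/eqP ->|a_in]; last first.
  case: eqP => [fa_fb|_]; last by rewrite add0r IH.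
  by case/negP: fb_notin; rewrite -fa_fb map_f.
rewrite eqxx big1_seq ?addr0 // => c /andP [_ c_in].
by case: eqP => // fb_fc; case/negP: fb_notin; rewrite fb_fc map_f.
Qed.

(* Second moments of linear combinations of white noise, for an arbitrary
   linear functional E playing the role of the expectation. *)
Section Covariance.
Variables (R : comRingType) (Omega : Type) (E : (Omega -> R) -> R).
Hypothesis E_add : forall f g, E (fun o => f o + g o) = E f + E g.
Hypothesis E_scale : forall (c : R) f, E (fun o => c * f o) = c * E f.

Lemma E_zero : E (fun _ => 0) = 0.
Proof.
have -> : (fun _ : Omega => 0 : R) = (fun _ => 0 * 0).
  by apply: functional_extensionality => o; rewrite mul0r.
by rewrite E_scale mul0r.
Qed.

Lemma E_sum (J : Type) (r : seq J) (F : J -> Omega -> R) :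
  E (fun o => \sum_(j <- r) F j o) = \sum_(j <- r) E (F j).
Proof.
elim: r => [|j r IH].
  rewrite big_nil -[RHS]E_zero; congr E.
  by apply: functional_extensionality => o; rewrite big_nil.
rewrite big_cons -IH -E_add; congr E; apply: functional_extensionality => o.
by rewrite big_cons.
Qed.

Definition Emx p q (Y : Omega -> 'M[R]_(p, q)) : 'M[R]_(p, q) :=
  \matrix_(i, j) E (fun o => Y o i j).

Lemma Emx_sum p q (J : Type) (r : seq J) (Y : J -> Omega -> 'M[R]_(p, q)) :
  Emx (fun o => \sum_(j <- r) Y j o) = \sum_(j <- r) Emx (Y j).
Proof.
apply/matrixP => i l; rewrite mxE summxE; under eq_bigr do rewrite mxE.
by rewrite -E_sum; congr E; apply: functional_extensionality => o; rewrite summxE.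
Qed.

Lemma Emx_mul p q p' q' (L : 'M[R]_(p', p)) (N : 'M[R]_(q, q'))
    (Y : Omega -> 'M[R]_(p, q)) :
  Emx (fun o => L *m Y o *m N) = L *m Emx Y *m N.
Proof.
apply/matrixP => i l.
have expand (Z : 'M[R]_(p, q)) :
    (L *m Z *m N) i l = \sum_s \sum_r (L i r * N s l) * Z r s.
  rewrite mxE; apply: eq_bigr => s _; rewrite mxE mulr_suml.
  by apply: eq_bigr => r _; rewrite mulrAC.
rewrite expand mxE.
under eq_bigr do under eq_bigr do rewrite mxE -E_scale.
under eq_bigr do rewrite -E_sum.
rewrite -E_sum.
by congr E; apply: functional_extensionality => o; rewrite expand.
Qed.

Variables (n : nat) (Rw : 'M[R]_n) (w : nat -> Omega -> 'cV[R]_n).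
Hypothesis w_cov : forall i j (p q : 'I_n),
  E (fun o => w i o p 0 * w j o q 0) = if i == j then Rw p q else 0.

Lemma Emx_white i j :
  Emx (fun o => w i o *m (w j o)^T) = if i == j then Rw else 0.
Proof.
apply/matrixP => p q; rewrite mxE.
have -> : (fun o => (w i o *m (w j o)^T) p q) = (fun o => w i o p 0 * w j o q 0).
  by apply: functional_extensionality => o; rewrite mxE big_ord1 mxE.
by rewrite w_cov; case: eqP; rewrite ?mxE.
Qed.

Lemma cov_white_comb (I : eqType) (s : seq I) (f : I -> nat)
    (M : I -> 'M[R]_n) (X : Omega -> 'cV[R]_n) :
  uniq (map f s) -> (forall o, X o = \sum_(a <- s) M a *m w (f a) o) ->
  \matrix_(p < n, q < n) E (fun o => X o p 0 * X o q 0)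
    = \sum_(a <- s) M a *m Rw *m (M a)^T.
Proof.
move=> uniq_fs hX.
have XXt o : X o *m (X o)^T = \sum_(a <- s) \sum_(b <- s)
                 M a *m (w (f a) o *m (w (f b) o)^T) *m (M b)^T.
  rewrite hX raddf_sum mulmx_suml; apply: eq_bigr => a _ /=.
  rewrite mulmx_sumr; apply: eq_bigr => b _.
  by rewrite trmx_mul !mulmxA.
have -> : \matrix_(p < n, q < n) E (fun o => X o p 0 * X o q 0)
    = Emx (fun o => X o *m (X o)^T).
  apply/matrixP => p q; rewrite !mxE; congr E; apply: functional_extensionality => o.
  by rewrite mxE big_ord1 mxE.
rewrite (functional_extensionality _ _ XXt) Emx_sum.
apply: eq_big_seq => a a_in; rewrite Emx_sum.
under eq_bigr do rewrite Emx_mul Emx_white.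
rewrite -(sum_pick_uniq (fun b => M a *m Rw *m (M b)^T) uniq_fs a_in).
by apply: eq_bigr => b _; case: eqP; rewrite ?mulmx0 ?mul0mx.
Qed.
End Covariance.

Section ClosedLoop.
Variables (R : rcfType) (n m v : nat).
Variables (A : 'M[R]_n) (B : 'M[R]_(n, m)) (K : 'M[R]_(m, n)).
Variables (delta gamma : nat -> bool) (x0 xh0 : 'cV[R]_n) (U0 : nat -> 'cV[R]_m).
Variable w : nat -> 'cV[R]_n.

Local Notation Acl := (A + B *m K).
Local Notation S j := (sys v A B K delta gamma x0 xh0 U0 w j).
Local Notation xs j := (S j).1.1.
Local Notation xhs j := (S j).1.2.
Local Notation Us j := (S j).2.

Lemma Us_S j : Us j.+1 = buf_update v K Acl (xhs j) (gamma j) (Us j).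
Proof. by rewrite /=; case: (S j) => [[x xh] U]. Qed.

Lemma xs_S j : xs j.+1 = A *m xs j + B *m Us j.+1 0%N + w j.
Proof. by rewrite Us_S /=; case: (S j) => [[x xh] U]. Qed.

Lemma xhs_S j : xhs j.+1 =
  (if delta j then A *m xs j else A *m xhs j) + B *m Us j.+1 0%N.
Proof. by rewrite Us_S /=; case: (S j) => [[x xh] U]; case: (delta j). Qed.

(* Open-loop response at slot j to the last L disturbances
   w_{j-1}, ..., w_{j-L}. *)
Definition noise j L : 'cV[R]_n := \sum_(l < L) A ^+ l *m w (j - l.+1)%N.

Lemma noise0 j : noise j 0 = 0.
Proof. exact: big_ord0. Qed.

Lemma noiseS j L : noise j.+1 L.+1 = w j + A *m noise j L.
Proof.
rewrite /noise big_ord_recl expr0 mul1mx subn1 mulmx_sumr; congr (_ + _).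
by apply: eq_bigr => l _; rewrite exprS mulmxA.
Qed.

Lemma noise_split t d L : noise (t + d) (d + L) = noise (t + d) d + A ^+ d *m noise t L.
Proof.
rewrite /noise big_split_ord mulmx_sumr; congr (_ + _); apply: eq_bigr => l _.
rewrite exprD -mulmxE -mulmxA /=.
by have -> : (t + d - (d + l).+1 = t - l.+1)%N by lia.
Qed.

Lemma est_error tau0 j s : (s < j)%N -> delta s ->
  xs j - xhs j = noise j (tauseq tau0 delta j).
Proof.
elim: j => [//|j IH] lt_sj delta_s; rewrite xs_S xhs_S [tauseq _ _ j.+1]/=.
case dj: (delta j).
  by rewrite /noise big_ord1 expr0 mul1mx subn1 addrC addKr.
rewrite noiseS -(IH (ltn_skip lt_sj delta_s (negbT dj)) delta_s) mulmxBr.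
by rewrite opprD addrAC addrACA subrr addr0 addrC.
Qed.

Hypothesis Acl_nilpotent : Acl ^+ v = 0.

Lemma Acl_pow_ge d : (v <= d)%N -> Acl ^+ d = 0.
Proof. by move=> le_vd; rewrite -(subnK le_vd) exprD Acl_nilpotent mulr0. Qed.

(* [Us (t + d).+1] is the buffer U_{t+d}: d slots after a successful
   controller transmission at t it holds the commands computed at t, shifted
   by d (zero beyond the prediction horizon). *)
Lemma buffer_after_ctrl t d : gamma t ->
  (forall i, (t < i <= t + d)%N -> ~~ gamma i) ->
  Us (t + d).+1 = fun i => if (i + d < v)%N then K *m Acl ^+ (i + d) *m xhs t else 0.
Proof.
move=> gamma_t; elim: d => [|d IH] silent.
  by rewrite addn0 Us_S gamma_t; apply: functional_extensionality => i; rewrite addn0.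
have silent_d : ~~ gamma (t + d).+1 by apply: silent; lia.
rewrite addnS Us_S (negbTE silent_d) IH; last by move=> i hi; apply: silent; lia.
apply: functional_extensionality => i /=; rewrite addSn addnS.
by case: ifP => h1; case: ifP => h2 //; lia.
Qed.

(* Between controller successes, the plant follows A_cl from the estimate
   xh_t (the shifted commands reproduce A_cl^d xh_t, padded with zeros where
   A_cl^d = 0) and A from the estimation error and the new disturbances. *)
Lemma state_between_ctrl t d : gamma t ->
  (forall i, (t < i < t + d)%N -> ~~ gamma i) ->
  xs (t + d) = Acl ^+ d *m xhs t + A ^+ d *m (xs t - xhs t) + noise (t + d) d.
Proof.
move=> gamma_t; elim: d => [|d IH] silent.
  by rewrite addn0 !expr0 !mul1mx noise0 addr0 addrC subrK.
rewrite addnS xs_S buffer_after_ctrl //; last by move=> i hi; apply: silent; lia.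
rewrite IH; last by move=> i hi; apply: silent; lia.
have ctrl_step : A *m (Acl ^+ d *m xhs t) +
    B *m (if (d < v)%N then K *m Acl ^+ d *m xhs t else 0) = Acl ^+ d.+1 *m xhs t.
  case: ltnP => le_d.
    by rewrite exprS -mulmxE !mulmxA !mulmxDl.
  by rewrite !Acl_pow_ge ?(leqW le_d) // !mul0mx !mulmx0 addr0.
rewrite add0n noiseS -ctrl_step exprS -mulmxE.
move: (xs t - xhs t) (noise (t + d) d) => e nz.
rewrite -(mulmxA A (A ^+ d) e) !mulmxDr -!addrA; congr (_ + _).
by rewrite [RHS]addrCA; congr (_ + _); rewrite addrCA; congr (_ + _); exact: addrC.
Qed.

Section ControlChain.
Variables (tau0 k s : nat).
Hypothesis hctrl : (v <= count gamma (iota 0 k))%N.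
Hypothesis lt_s_tv : (s < tk gamma k v)%N.
Hypothesis delta_s : delta s.

Local Notation T i := (tk gamma k i).
Local Notation tau i := (tau_k tau0 delta gamma k i).
Local Notation phi i := (phi_k tau0 delta gamma k i).
Local Notation lo i := (tau_lo delta gamma tau0 k i).

(* One controller interval: x at t^i_k in terms of x at t^{i+1}_k; the
   estimate at t^{i+1}_k misses exactly the last tau^{i+1}_k disturbances. *)
Lemma state_at_ctrl i : (i < v)%N -> xs (T i) =
  Acl ^+ (T i - T i.+1) *m (xs (T i.+1) - noise (T i.+1) (tau i.+1))
  + noise (T i) (phi i).
Proof.
move=> lt_iv; have [lt_next gamma_next silent] := tk_step hctrl lt_iv.
have err : xs (T i.+1) - xhs (T i.+1) = noise (T i.+1) (tau i.+1).
  apply: (est_error tau0 _ delta_s); exact: leq_trans lt_s_tv (tk_antitone gamma k lt_iv).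
have split_T : T i = (T i.+1 + (T i - T i.+1))%N by rewrite subnKC // ltnW.
rewrite /phi_k /eta_k; move: (T i - T i.+1)%N split_T silent => d -> silent.
rewrite (state_between_ctrl gamma_next silent) noise_split err.
have -> : xs (T i.+1) - noise (T i.+1) (tau i.+1) = xhs (T i.+1).
  by rewrite -err opprB addrC subrK.
by rewrite -addrA [noise _ d + _]addrC.
Qed.

Lemma state_chain i : (i <= v)%N -> xs k =
  \sum_(j < i) Acl ^+ (k - T j) *m (noise (T j) (phi j) - noise (T j) (lo j))
  + Acl ^+ (k - T i) *m (xs (T i) - noise (T i) (lo i)).
Proof.
elim: i => [|i IH] lt_iv.
  by rewrite big_ord0 add0r -[T 0]/k subnn expr0 mul1mx -[lo 0]/0%N noise0 subr0.
rewrite big_ord_recr (IH (ltnW lt_iv)) -addrA; congr (_ + _).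
rewrite state_at_ctrl // -[lo i.+1]/(tau i.+1) -addrA addrC mulmxDr mulmxA.
congr (_ + _); congr (_ *m _).
have [lt_next _ _] := tk_step hctrl lt_iv.
have le_ik := tk_antitone gamma k (leq0n i).
by rewrite mulmxE -exprD; congr (_ ^+ _); rewrite -[T 0]/k in le_ik; lia.
Qed.

(* The remainder vanishes at i = v because k - t^v_k >= v. *)
Lemma state_expansion : xs k =
  \sum_(i < v) Acl ^+ (k - T i) *m (noise (T i) (phi i) - noise (T i) (lo i)).
Proof.
by rewrite (state_chain (leqnn v)) Acl_pow_ge ?mul0mx ?addr0 // (tk_gap _ hctrl).
Qed.

Lemma state_white_comb : xs k =
  \sum_(a <- noise_pairs delta gamma tau0 k v)
     (Acl ^+ (k - T a.1) *m A ^+ a.2) *m w (T a.1 - a.2.+1)%N.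
Proof.
rewrite state_expansion /noise_pairs big_allpairs_dep.
have -> : iota 0 v = index_iota 0 v by rewrite /index_iota subn0.
rewrite big_mkord; apply: eq_bigr => i _.
rewrite /noise (sum_ord_diff (fun l => A ^+ l *m w (T i - l.+1)%N)); last first.
  exact: (@tau_lo_le_phi delta gamma tau0 k v hctrl i (ltn_ord i)).
by rewrite mulmx_sumr; apply: eq_bigr => l _; rewrite mulmxA.
Qed.

End ControlChain.
End ClosedLoop.

Section CovarianceFormula.
Variables (R : rcfType) (n : nat) (Acl A Rw : 'M[R]_n).
Variables (delta gamma : nat -> bool) (tau0 k v : nat).
Hypothesis hctrl : (v <= count gamma (iota 0 k))%N.

Local Notation T i := (tk gamma k i).
Local Notation tau i := (tau_k tau0 delta gamma k i).
Local Notation phi i := (phi_k tau0 delta gamma k i).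
Local Notation lo i := (tau_lo delta gamma tau0 k i).
Local Notation F := (Fcov A Rw).

Lemma window_cov_sum :
  \sum_(a <- noise_pairs delta gamma tau0 k v)
     (Acl ^+ (k - T a.1) *m A ^+ a.2) *m Rw *m (Acl ^+ (k - T a.1) *m A ^+ a.2)^T
  = \sum_(i < v) Gfun Acl (k - T i) (F (phi i) - F (lo i)).
Proof.
rewrite /noise_pairs big_allpairs_dep.
have -> : iota 0 v = index_iota 0 v by rewrite /index_iota subn0.
rewrite big_mkord; apply: eq_bigr => i _.
by rewrite Gfun_Fcov_diff // (@tau_lo_le_phi delta gamma tau0 k v hctrl i (ltn_ord i)).
Qed.

(* Window 0 starts at offset 0 with G(0, .) the identity; for the others the
   exponent k - t^{i+1}_k is rewritten by [phi_prefix_sum], and an empty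
   window (tau = phi) contributes nothing. *)
Lemma cov_formula_reindex : (0 < v)%N ->
  \sum_(i < v) Gfun Acl (k - T i) (F (phi i) - F (lo i))
  = F (phi 0%N) + \sum_(i < v.-1)
      Gfun Acl (\sum_(j < i.+1) phi j - \sum_(j < i.+1) tau j.+1)%N
        (if (tau i.+1 < phi i.+1)%N then F (phi i.+1) - F (tau i.+1) else 0).
Proof.
move=> v_gt0; rewrite -[in LHS](prednK v_gt0) big_ord_recl; congr (_ + _).
  by rewrite /Gfun -[T 0]/k subnn expr0 mul1mx trmx1 mulmx1 /Fcov big_ord0 subr0.
apply: eq_bigr => i _; rewrite phi_prefix_sum addnK /=.
have lt_iv : (i.+1 < v)%N by have := ltn_ord i; lia.
have := @tau_lo_le_phi delta gamma tau0 k v hctrl i.+1 lt_iv.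
rewrite -[lo i.+1]/(tau i.+1); case: ltnP => // le_phi le_tau.
have -> : tau i.+1 = phi i.+1 by apply/eqP; rewrite eqn_leq le_phi le_tau.
by rewrite subrr /Gfun mulmx0 mul0mx.
Qed.

End CovarianceFormula.

Theorem proposition1
  (R : rcfType) (n m v : nat)
  (A : 'M[R]_n) (B : 'M[R]_(n, m)) (K : 'M[R]_(m, n)) (Rw : 'M[R]_n)
  (hRw : posdef Rw) (hA : spec_rad_gt1 A) (hK : spec_rad_lt1 (A + B *m K))
  (hv : (1 <= v)%N) (hdead : (A + B *m K) ^+ v = 0)
  (* realized schedule and transmission outcomes *)
  (a : nat -> nat) (delta gamma : nat -> bool)
  (ha : forall j, a j = 1%N \/ a j = 2%N)
  (hdelta : forall j, delta j -> a j = 1%N)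
  (hgamma : forall j, gamma j -> a j = 2%N)
  (tau0 : nat)
  (* initial plant state, initial estimate, initial actuator buffer *)
  (x0 xh0 : 'cV[R]_n) (U0 : nat -> 'cV[R]_m)
  (* disturbances: random vectors on Omega, with expectation E *)
  (Omega : Type) (E : (Omega -> R) -> R)
  (E_add : forall f g, E (fun o => f o + g o) = E f + E g)
  (E_scale : forall (c : R) f, E (fun o => c * f o) = c * E f)
  (E_one : E (fun _ => 1) = 1)
  (w : nat -> Omega -> 'cV[R]_n)
  (w_mean : forall i (p : 'I_n), E (fun o => w i o p 0) = 0)
  (w_cov : forall i j (p q : 'I_n),
     E (fun o => w i o p 0 * w j o q 0) = if i == j then Rw p q else 0)
  (k : nat)
  (hctrl : (v <= count gamma (iota 0 k))%N)
  (hsens : exists s, (s < tk gamma k v)%N /\ delta s) :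
  let x := fun o => (sys v A B K delta gamma x0 xh0 U0 (fun j => w j o) k).1.1 in
  let P := \matrix_(p < n, q < n) E (fun o => x o p 0 * x o q 0) in
  let tau := tau_k tau0 delta gamma k in
  let phi := phi_k tau0 delta gamma k in
  P = Fcov A Rw (phi 0%N)
      + \sum_(i < v.-1)
          Gfun (A + B *m K)
            (\sum_(j < i.+1) phi j - \sum_(j < i.+1) tau j.+1)%N
            (if (tau i.+1 < phi i.+1)%N
             then Fcov A Rw (phi i.+1) - Fcov A Rw (tau i.+1) else 0).
Proof.
move=> x P tau phi; have [s [lt_s_tv delta_s]] := hsens.
have noise_comb o :=
  state_white_comb x0 xh0 U0 (fun j => w j o) hdead tau0 hctrl lt_s_tv delta_s.
have uniq_idx := uniq_noise_index tau0 hctrl lt_s_tv delta_s.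
rewrite /P (cov_white_comb E_add E_scale w_cov uniq_idx noise_comb).
by rewrite window_cov_sum // cov_formula_reindex.
Qed.
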